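(* Let $X$ be a non-empty set, $\overline X=X\cup X'$ and $\widetilde X=\overline X\cup\{(x\wedge y):x,y\in\overline X\}$. Make the free semigroup $\widetilde X^+$ into a binary semigroup by $(u\wedge v)=(\iota u\wedge v\tau)$ for $u,v\in\widetilde X^+$. Then the relation $\widetilde\Theta(\mathcal{CS},X)=\{(u,v)\in\widetilde X^+\times\widetilde X^+:\overline{u}=\overline{v}\}$ (where $\overline{w}$ denotes the reduced form of $w$) is a congruence on the binary semigroup $\widetilde X^+$, and the factor $\widetilde X^+/\widetilde\Theta(\mathcal{CS},X)$ together with the matched mapping $\xi\colon\overline X\to \widetilde X^+/\widetilde\Theta(\mathcal{CS},X)$, $y\mapsto y\widetilde\Theta(\mathcal{CS},X)$, is a bifree object in the class $\mathcal{CS}$ of completely simple semigroups on $X$.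
   Context: $X'=\{x':x\in X\}$ is a set disjoint from $X$ in bijection with $X$ via $x\mapsto x'$; extend $'$ to $\overline X$ by $(x')'=x$. The free binary semigroup $F_2(\overline X)$ is the smallest set $W$ of nonempty words over $\overline X\cup\{(,\wedge,)\}$ containing $\overline X$ and closed under concatenation $uv$ and under $(u,v)\mapsto(u\wedge v)$, with these two operations. Elements $(x\wedge y)$, $x,y\in\overline X$, are called $\wedge$-letters; $\widetilde X^+$ is the free semigroup on $\widetilde X$, viewed as a subset of $F_2(\overline X)$. For a term $w$, $\iota w$ [$w\tau$] is the first [last] element of $\overline X$ occurring in $w$. Reductions ($u,v$ terms, $x,y,z\in\overline X$): (R0) $(u\wedge v)\rightsquigarrow(\iota u\wedge v\tau)$; (R1) $x(y\wedge x)\rightsquigarrow x$; (R2) $(x\wedge y)x\rightsquigarrow x$; (R3) $(x\wedge y)(x\wedge z)\rightsquigarrow(x\wedge z)$; (R4) $(z\wedge x)(y\wedge x)\rightsquigarrow(z\wedge x)$; (R5) $x'x\rightsquigarrow(x'\wedge x)$, applied to segments of a term. It is known (Auinger) that every term has a unique reduced form (one to which no reduction applies) obtainable by repeated reductions; denote it $\overline w$. For a regular semigroup $S$, a map $\nu\colon\overline X\to S$ is matched if $x'\nu$ is an inverse of $x\nu$ for all $x\in X$. A bifree object in a class $\mathcal K$ of regular semigroups on $X$ is $B\in\mathcal K$ with a matched map $\xi\colon\overline X\to B$ such that for every $S\in\mathcal K$ and matched $\nu\colon\overline X\to S$ there is a unique homomorphism $\phi\colon B\to S$ with $\xi\phi=\nu$.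 *)

From Stdlib Require Import List Relations ClassicalEpsilon.
Import ListNotations.
Set Implicit Arguments.

(* Xbar X = X ∪ X' : inl x stands for x, inr x stands for x'. *)
Definition Xbar (X : Type) : Type := (X + X)%type.
Definition primeX {X : Type} (a : Xbar X) : Xbar X :=
  match a with inl x => inr x | inr x => inl x end.

(* Xtilde X = Xbar ∪ { (x ∧ y) : x, y ∈ Xbar } *)
Inductive tletter (X : Type) : Type :=
| TL : Xbar X -> tletter X
| TW : Xbar X -> Xbar X -> tletter X.
Arguments TL {X} a.
Arguments TW {X} a b.

Definition iota_l {X} (t : tletter X) : Xbar X :=
  match t with TL a => a | TW a _ => a end.
Definition tau_l {X} (t : tletter X) : Xbar X :=
  match t with TL a => a | TW _ b => b end.

Record neword (X : Type) := NeWord { nw_hd : tletter X; nw_tl : list (tletter X) }.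
Arguments NeWord {X} _ _.
Definition to_list {X} (u : neword X) : list (tletter X) := nw_hd u :: nw_tl u.

Definition nw_cat {X} (u v : neword X) : neword X :=
  NeWord (nw_hd u) (nw_tl u ++ to_list v).

Definition nw_iota {X} (u : neword X) : Xbar X := iota_l (nw_hd u).
Definition nw_tau {X} (u : neword X) : Xbar X := tau_l (last (nw_tl u) (nw_hd u)).

Definition nw_wedge {X} (u v : neword X) : neword X :=
  NeWord (TW (nw_iota u) (nw_tau v)) [].

Definition nw_single {X} (y : Xbar X) : neword X := NeWord (TL y) [].

(* ---------- reductions R1-R5 (R0 is trivial on Xtilde^+) ---------- *)
Inductive red_rule {X : Type} : list (tletter X) -> list (tletter X) -> Prop :=
| R1 (x y : Xbar X) : red_rule [TL x; TW y x] [TL x]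
| R2 (x y : Xbar X) : red_rule [TW x y; TL x] [TL x]
| R3 (x y z : Xbar X) : red_rule [TW x y; TW x z] [TW x z]
| R4 (x y z : Xbar X) : red_rule [TW z x; TW y x] [TW z x]
| R5 (x : Xbar X) : red_rule [TL (primeX x); TL x] [TW (primeX x) x].

Definition red_step {X : Type} (u v : list (tletter X)) : Prop :=
  exists p s l r, red_rule l r /\ u = p ++ l ++ s /\ v = p ++ r ++ s.

Definition reds {X : Type} : relation (list (tletter X)) :=
  clos_refl_trans _ red_step.

Definition is_reduced {X : Type} (w : list (tletter X)) : Prop :=
  forall v, ~ red_step w v.

Definition is_reduced_form {X : Type} (u w : list (tletter X)) : Prop :=
  reds u w /\ is_reduced w.

Definition ThetaCS (X : Type) (u v : neword X) : Prop :=
  exists w, is_reduced_form (to_list u) w /\ is_reduced_form (to_list v) w.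

Definition bin_congruence {X : Type} (R : neword X -> neword X -> Prop) : Prop :=
  (forall u, R u u) /\ (forall u v, R u v -> R v u) /\
  (forall u v w, R u v -> R v w -> R u w) /\
  (forall u v u' v', R u u' -> R v v' ->
     R (nw_cat u v) (nw_cat u' v') /\ R (nw_wedge u v) (nw_wedge u' v')).

Definition FactorCS (X : Type) : Type :=
  { P : neword X -> Prop | exists u, P = ThetaCS u }.

Definition cls {X : Type} (u : neword X) : FactorCS X :=
  exist _ (ThetaCS u) (ex_intro _ u eq_refl).

Definition rep {X : Type} (P : FactorCS X) : neword X :=
  proj1_sig (constructive_indefinite_description _ (proj2_sig P)).

Definition factor_mul {X : Type} (P Q : FactorCS X) : FactorCS X :=
  cls (nw_cat (rep P) (rep Q)).

Definition factor_xi {X : Type} (y : Xbar X) : FactorCS X := cls (nw_single y).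

Definition sg_assoc {S : Type} (m : S -> S -> S) : Prop :=
  forall a b c, m a (m b c) = m (m a b) c.

Definition is_ideal {S : Type} (m : S -> S -> S) (I : S -> Prop) : Prop :=
  (exists a, I a) /\ (forall a s, I a -> I (m s a) /\ I (m a s)).

Definition simple_sg {S : Type} (m : S -> S -> S) : Prop :=
  forall I, is_ideal m I -> forall a, I a.

(* primitive idempotent: minimal idempotent w.r.t. the natural order *)
Definition primitive_idem {S : Type} (m : S -> S -> S) (e : S) : Prop :=
  m e e = e /\
  (forall f, m f f = f -> m e f = f -> m f e = f -> f = e).

Definition completely_simple {S : Type} (m : S -> S -> S) : Prop :=
  sg_assoc m /\ simple_sg m /\ exists e, primitive_idem m e.

Definition is_inverse {S : Type} (m : S -> S -> S) (a b : S) : Prop :=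
  m a (m b a) = a /\ m b (m a b) = b.

Definition matched {X S : Type} (m : S -> S -> S) (nu : Xbar X -> S) : Prop :=
  forall x : X, is_inverse m (nu (inl x)) (nu (inr x)).

Definition sg_hom {S T : Type} (mS : S -> S -> S) (mT : T -> T -> T) (phi : S -> T) : Prop :=
  forall a b, phi (mS a b) = mT (phi a) (phi b).

Definition bifree_CS (X B : Type) (mB : B -> B -> B) (xi : Xbar X -> B) : Prop :=
  completely_simple mB /\ matched mB xi /\
  forall (S : Type) (mS : S -> S -> S), completely_simple mS ->
    forall nu : Xbar X -> S, matched mS nu ->
      exists phi : B -> S,
        sg_hom mB mS phi /\ (forall y, phi (xi y) = nu y) /\
        (forall psi : B -> S, sg_hom mB mS psi -> (forall y, psi (xi y) = nu y) ->
           forall b, psi b = phi b).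

(* The reductions R1-R5 shorten words and all their critical pairs close, so by
   Newman's lemma every word has a unique reduced form; hence Theta is an
   equivalence, compatible with concatenation because reductions act on segments,
   and with the wedge because reductions preserve the iota of the first letter and
   the tau of the last one.  Every word w has a formal inverse w* with
   w w* (iota w ^ y) = (iota w ^ y) and (y ^ w tau) w* w = (y ^ w tau) modulo Theta;
   this makes the factor simple, with the primitive idempotents (x ^ x).
   In a completely simple semigroup S the H-class R_p /\ L_q contains a unique
   idempotent E(p, q) (the identity of the group containing pq).  Evaluating
   (x ^ y) as E(x nu, y nu) respects every reduction, which gives the morphism, and
   any morphism extending nu maps (x ^ y) to an idempotent of R_(x nu) /\ L_(y nu),
   which gives uniqueness. *)

From Stdlib Require Import List Relations Classical ClassicalEpsilon
  FunctionalExtensionality PropExtensionality ProofIrrelevance Lia Morphisms Wf_nat.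
From Stdlib Require Relations_3_facts.
Import ListNotations.
Set Implicit Arguments.

Section NormalForms.
Variables (U : Type) (R : relation U).

Lemma clos_rt_Rstar x y : clos_refl_trans U R x y -> Relations_2.Rstar U R x y.
Proof.
  intros H; apply clos_rt_rt1n in H.
  induction H; [constructor | econstructor; eauto].
Qed.

Lemma noetherian_nf_exists : Relations_3.Noetherian U R ->
  forall x, exists y, clos_refl_trans U R x y /\ forall z, ~ R y z.
Proof.
  intros HN x; induction (HN x) as [x _ IH].
  destruct (classic (exists y, R x y)) as [[y Hy] | Hirr].
  - destruct (IH y Hy) as (z & Hyz & Hz).
    exists z; split; [apply rt_trans with y; [apply rt_step|] |]; assumption.
  - exists x; split; [apply rt_refl | intros z Hz; apply Hirr; eauto].
Qed.

Lemma confluent_nf_unique : Relations_3.Confluent U R ->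
  forall x y1 y2, clos_refl_trans U R x y1 -> clos_refl_trans U R x y2 ->
  (forall z, ~ R y1 z) -> (forall z, ~ R y2 z) -> y1 = y2.
Proof.
  intros HC x y1 y2 H1 H2 N1 N2.
  destruct (HC x y1 y2 (clos_rt_Rstar H1) (clos_rt_Rstar H2)) as (z & Z1 & Z2).
  destruct Z1 as [|? ? S1]; [|exfalso; exact (N1 _ S1)].
  destruct Z2 as [|? ? S2]; [reflexivity | exfalso; exact (N2 _ S2)].
Qed.

End NormalForms.

Section Reduction.
Variable X : Type.
Notation T := (tletter X).

Lemma primeX_involutive (a : Xbar X) : primeX (primeX a) = a.
Proof. destruct a; reflexivity. Qed.

Lemma red_rule_shape (l r : list T) :
  red_rule l r -> exists a b c, l = [a; b] /\ r = [c].
Proof. destruct 1; eauto. Qed.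

Lemma red_rule_functional (l r1 r2 : list T) : red_rule l r1 -> red_rule l r2 -> r1 = r2.
Proof. destruct 1; inversion 1; subst; congruence. Qed.

Lemma red_rule_overlap (a b c r1 r2 : T) :
  red_rule [a; b] [r1] -> red_rule [b; c] [r2] ->
  (r1 = a /\ r2 = c) \/ exists s, red_rule [r1; c] [s] /\ red_rule [a; r2] [s].
Proof.
  inversion 1; subst; inversion 1; subst;
    try (left; split; reflexivity);
    try (right; eexists; split; constructor; fail).
  rewrite !primeX_involutive; right; eexists; split; constructor.
Qed.

Lemma red_step_rule p s (l r : list T) : red_rule l r -> red_step (p ++ l ++ s) (p ++ r ++ s).
Proof. intros H; exists p, s, l, r; auto. Qed.

Lemma red_step_Rstar (u v : list T) : red_step u v -> Relations_2.Rstar _ red_step u v.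
Proof. intros H; econstructor; [exact H | constructor]. Qed.

Lemma red_rules_joinable p m s1 s2 (a1 b1 c1 a2 b2 c2 : T) :
  red_rule [a1; b1] [c1] -> red_rule [a2; b2] [c2] -> a1 :: b1 :: s1 = m ++ a2 :: b2 :: s2 ->
  Relations_3.coherent _ red_step (p ++ c1 :: s1) (p ++ m ++ c2 :: s2).
Proof.
  intros R1 R2 E.
  destruct m as [|x [|y m]]; simpl in E; inversion E; subst.
  - injection (red_rule_functional R1 R2) as ->; exists (p ++ c2 :: s2); split; constructor.
  - destruct (red_rule_overlap R1 R2) as [[-> ->] | (s & S1 & S2)].
    + eexists; split; constructor.
    + exists (p ++ s :: s2); split; apply red_step_Rstar.
      * exact (red_step_rule p s2 S1).
      * exact (red_step_rule p s2 S2).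
  - exists (p ++ c1 :: m ++ c2 :: s2); split; apply red_step_Rstar.
    + pose proof (red_step_rule (p ++ c1 :: m) s2 R2) as H.
      rewrite <- !app_assoc in H; exact H.
    + exact (red_step_rule p (m ++ c2 :: s2) R1).
Qed.

Lemma red_step_locally_confluent : Relations_3.Locally_confluent _ (@red_step X).
Proof.
  intros u v1 v2 (p1 & s1 & l1 & r1 & R1 & -> & ->) (p2 & s2 & l2 & r2 & R2 & E & ->).
  destruct (red_rule_shape R1) as (a1 & b1 & c1 & -> & ->).
  destruct (red_rule_shape R2) as (a2 & b2 & c2 & -> & ->).
  apply app_eq_app in E as [m [[-> H] | [-> H]]]; rewrite <- app_assoc.
  - apply Relations_3_facts.coherent_symmetric.
    exact (red_rules_joinable p2 m _ R2 R1 H).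
  - exact (red_rules_joinable p1 m _ R1 R2 H).
Qed.

Lemma red_step_length (u v : list T) : red_step u v -> length v < length u.
Proof.
  intros (p & s & l & r & R & -> & ->).
  destruct (red_rule_shape R) as (a & b & c & -> & ->).
  rewrite !length_app; simpl; lia.
Qed.

Lemma red_step_noetherian : Relations_3.Noetherian _ (@red_step X).
Proof.
  intros u; induction u as [u IH] using (induction_ltof1 _ (@length T)).
  constructor; intros v Hv; apply IH, red_step_length, Hv.
Qed.

Lemma reduced_form_exists (u : list T) : exists w, is_reduced_form u w.
Proof. exact (noetherian_nf_exists red_step_noetherian u). Qed.

Lemma reduced_form_unique (u w1 w2 : list T) :
  is_reduced_form u w1 -> is_reduced_form u w2 -> w1 = w2.
Proof.
  intros [H1 N1] [H2 N2].
  exact (confluent_nf_unique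
           (Relations_3_facts.Newman _ _ red_step_noetherian red_step_locally_confluent)
           H1 H2 N1 N2).
Qed.

Definition nf_equiv (u v : list T) : Prop :=
  exists w, is_reduced_form u w /\ is_reduced_form v w.

Global Instance nf_equiv_Equivalence : Equivalence nf_equiv.
Proof.
  split.
  - intros u; destruct (reduced_form_exists u) as [w Hw]; exists w; auto.
  - intros u v (w & Hu & Hv); exists w; auto.
  - intros u v w (a & Hu & Hva) (b & Hvb & Hw).
    rewrite (reduced_form_unique Hva Hvb) in Hu; exists b; auto.
Qed.

Lemma reds_nf_equiv (u v : list T) : reds u v -> nf_equiv u v.
Proof.
  intros H; destruct (reduced_form_exists v) as [w [Hvw Hw]].
  exists w; split; split; [apply rt_trans with v | | |]; assumption.
Qed.

Lemma reds_context p s (u v : list T) : reds u v -> reds (p ++ u ++ s) (p ++ v ++ s).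
Proof.
  induction 1 as [u v (p0 & s0 & l & r & R & -> & ->)| |];
    [| apply rt_refl | eapply rt_trans; eauto].
  apply rt_step; exists (p ++ p0), (s0 ++ s), l, r; rewrite !app_assoc; auto.
Qed.

Global Instance app_nf_equiv_Proper : Proper (nf_equiv ==> nf_equiv ==> nf_equiv) (@app T).
Proof.
  intros u u' (a & [Hua _] & [Hu'a _]) v v' (b & [Hvb _] & [Hv'b _]).
  assert (Hab : forall x y, reds x a -> reds y b -> reds (x ++ y) (a ++ b)).
  { intros x y Hx Hy; apply rt_trans with (a ++ y).
    - exact (reds_context [] y Hx).
    - rewrite <- (app_nil_r y), <- (app_nil_r b); apply reds_context, Hy. }
  transitivity (a ++ b); [| symmetry]; apply reds_nf_equiv, Hab; assumption.
Qed.

Global Instance cons_nf_equiv_Proper : Proper (eq ==> nf_equiv ==> nf_equiv) (@cons T).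
Proof. intros c _ <- u v H; change (nf_equiv ([c] ++ u) ([c] ++ v)); rewrite H; reflexivity. Qed.

Lemma red_rule_nf_equiv (a b c : T) rest :
  red_rule [a; b] [c] -> nf_equiv (a :: b :: rest) (c :: rest).
Proof. intros R; apply reds_nf_equiv, rt_step, (red_step_rule [] rest R). Qed.

Lemma red_rule_ends (a b c : T) : red_rule [a; b] [c] -> iota_l a = iota_l c /\ tau_l b = tau_l c.
Proof. inversion 1; auto. Qed.

Lemma last_cons_default (c d : T) l : last (c :: l) d = last l c.
Proof.
  revert c d; induction l as [|x l IH]; intros c d; [reflexivity|].
  change (last (x :: l) d = last (x :: l) c); rewrite !IH; reflexivity.
Qed.

Definition same_ends (u v : list T) : Prop :=
  option_map iota_l (hd_error u) = option_map iota_l (hd_error v) /\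
  forall d, tau_l (last u d) = tau_l (last v d).

Lemma red_step_same_ends (u v : list T) : red_step u v -> same_ends u v.
Proof.
  intros (p & s & l & r & R & -> & ->).
  destruct (red_rule_shape R) as (a & b & c & -> & ->).
  destruct (red_rule_ends R) as [Ha Hb]; split.
  - destruct p; simpl; congruence.
  - intros d; destruct s as [|z s] using rev_ind.
    + change [a; b] with ([a] ++ [b]).
      rewrite !app_nil_r, app_assoc, !last_last; exact Hb.
    + rewrite !app_assoc, !last_last; reflexivity.
Qed.

Lemma nf_equiv_same_ends (u v : list T) : nf_equiv u v -> same_ends u v.
Proof.
  assert (Hreds : forall x y, reds x y -> same_ends x y).
  { induction 1 as [x y H| x | x y z _ [I1 T1] _ [I2 T2]].
    - exact (red_step_same_ends H).
    - split; reflexivity.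
    - split; [congruence | intros d; rewrite T1; apply T2]. }
  intros (w & [Hu _] & [Hv _]).
  destruct (Hreds _ _ Hu) as [I1 T1], (Hreds _ _ Hv) as [I2 T2].
  split; [congruence | intros d; rewrite T1; symmetry; apply T2].
Qed.

Lemma R5_primed (x : Xbar X) : red_rule [TL x; TL (primeX x)] [TW x (primeX x)].
Proof. pose proof (R5 (primeX x)) as H; rewrite primeX_involutive in H; exact H. Qed.

Lemma red_rule_letter_wedge (c : T) z : red_rule [c; TW z (tau_l c)] [c].
Proof. destruct c; constructor. Qed.

Lemma red_rule_wedge_letter (c : T) z : red_rule [TW (iota_l c) z; c] [c].
Proof. destruct c; constructor. Qed.

Definition letter_inv (c : T) : list T :=
  match c with TL x => [TL (primeX x)] | TW x y => [TW x y] end.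

Fixpoint word_inv (c : T) (l : list T) : list T :=
  match l with
  | [] => letter_inv c
  | d :: l' => word_inv d l' ++ TW (iota_l d) (tau_l c) :: letter_inv c
  end.

Lemma letter_inv_r (c : T) y rest :
  nf_equiv (c :: letter_inv c ++ TW (iota_l c) y :: rest) (TW (iota_l c) y :: rest).
Proof.
  destruct c as [x | x z]; simpl.
  - rewrite (red_rule_nf_equiv _ (R5_primed x)); apply red_rule_nf_equiv; constructor.
  - rewrite (red_rule_nf_equiv _ (R3 x z z)); apply red_rule_nf_equiv; constructor.
Qed.

Lemma letter_inv_l (c : T) y rest :
  nf_equiv (TW y (tau_l c) :: letter_inv c ++ c :: rest) (TW y (tau_l c) :: rest).
Proof.
  destruct c as [x | z x]; simpl.
  - rewrite (red_rule_nf_equiv _ (R5 x)); apply red_rule_nf_equiv; constructor.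
  - rewrite (red_rule_nf_equiv _ (R4 x z z)); apply red_rule_nf_equiv; constructor.
Qed.

Lemma word_inv_r (c : T) l y :
  nf_equiv ((c :: l) ++ word_inv c l ++ [TW (iota_l c) y]) [TW (iota_l c) y].
Proof.
  revert c y; induction l as [|d l IH]; intros c y; [apply letter_inv_r|].
  replace ((c :: d :: l) ++ word_inv c (d :: l) ++ [TW (iota_l c) y]) with
    (c :: ((d :: l) ++ word_inv d l ++ [TW (iota_l d) (tau_l c)])
       ++ letter_inv c ++ [TW (iota_l c) y]) by (simpl; rewrite <- !app_assoc; reflexivity).
  rewrite IH; simpl.
  rewrite (red_rule_nf_equiv _ (red_rule_letter_wedge c (iota_l d))); apply letter_inv_r.
Qed.

Lemma word_inv_l (c : T) l y :
  nf_equiv (TW y (tau_l (last l c)) :: word_inv c l ++ c :: l) [TW y (tau_l (last l c))].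
Proof.
  revert c y; induction l as [|d l IH]; intros c y; [apply (letter_inv_l c y [])|].
  rewrite last_cons_default; simpl; rewrite <- app_assoc; simpl.
  rewrite (letter_inv_l c (iota_l d) (d :: l)).
  rewrite (red_rule_nf_equiv _ (red_rule_wedge_letter d (tau_l c))).
  apply IH.
Qed.

End Reduction.

(* [F] is the idempotent of the H-class R_p /\ L_q. *)
Definition RL_idempotent {S : Type} (m : S -> S -> S) (p q F : S) : Prop :=
  m F F = F /\ m F p = p /\ m q F = q /\ (exists s, F = m p s) /\ (exists t, F = m t q).

Lemma RL_idempotent_unique {S : Type} (m : S -> S -> S) p q F G : sg_assoc m ->
  RL_idempotent m p q F -> RL_idempotent m p q G -> F = G.
Proof.
  intros Hassoc (_ & Fp & Fq & _ & [t Ft]) (_ & Gp & Gq & [s Gs] & _).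
  transitivity (m F G).
  - rewrite Ft at 2; rewrite <- Hassoc, Gq; exact Ft.
  - rewrite Gs at 1; rewrite Hassoc, Fp; symmetry; exact Gs.
Qed.

Lemma inverse_RL_idempotent {S : Type} (m : S -> S -> S) a b : sg_assoc m ->
  is_inverse m a b -> RL_idempotent m a b (m a b).
Proof.
  intros Hassoc [Ha Hb]; repeat split; eauto.
  - rewrite <- Hassoc, Hb; reflexivity.
  - rewrite <- Hassoc, Ha; reflexivity.
Qed.

Lemma hom_RL_idempotent {A B : Type} (mA : A -> A -> A) (mB : B -> B -> B) (f : A -> B) p q F :
  sg_hom mA mB f -> RL_idempotent mA p q F -> RL_idempotent mB (f p) (f q) (f F).
Proof.
  intros Hf (FF & Fp & Fq & [s Fs] & [t Ft]); unfold RL_idempotent; rewrite <- !Hf.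
  repeat split; [congruence | congruence | congruence | exists (f s) | exists (f t)];
    rewrite <- Hf; congruence.
Qed.

(* Rewrites with [L = R] inside left-associated products, where [L] may also occur
   behind a prefix [z], i.e. as the normal form of [z * L]. *)
Ltac assoc_rewrite assoc H :=
  lazymatch type of H with
  | ?m ?a ?b = ?R =>
      let H' := fresh in
      assert (H' : forall z, m z (m a b) = m z R) by (intro; rewrite H; reflexivity);
      repeat setoid_rewrite assoc in H'; rewrite ?H, ?H'; clear H'
  end.

Section CompletelySimple.
Variables (S : Type) (m : S -> S -> S) (e : S).
Hypotheses (Hassoc : sg_assoc m) (Hsimple : simple_sg m) (He : primitive_idem m e).
Local Infix "**" := m (at level 40, left associativity).
Local Ltac norm := repeat rewrite Hassoc.
Local Ltac arw H := assoc_rewrite Hassoc H.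

Lemma simple_divides a b : exists s t, b = s ** a ** t.
Proof.
  apply (Hsimple (I := fun x => exists s t, x = s ** a ** t)); split.
  - exists (a ** a ** a), a, a; reflexivity.
  - intros x s (s0 & t0 & ->); split; [exists (s ** s0), t0 | exists s0, (t0 ** s)];
      norm; reflexivity.
Qed.

Let ee : e ** e = e := proj1 He.

Lemma local_group_inverse b : e ** b = b -> b ** e = b ->
  exists u, e ** u = u /\ u ** e = u /\ u ** b = e /\ b ** u = e.
Proof.
  intros eb be; destruct (simple_divides b e) as (x & y & xby); symmetry in xby.
  set (U := e ** x ** e); set (V := e ** y ** e).
  assert (Ue : U ** e = U) by (unfold U; arw ee; reflexivity).
  assert (eV : e ** V = V) by (unfold V; norm; arw ee; reflexivity).
  assert (Ve : V ** e = V) by (unfold V; arw ee; reflexivity).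
  assert (UbV : U ** b ** V = e).
  { unfold U, V; norm; arw eb; arw be; arw xby; arw ee; reflexivity. }
  assert (VUb : V ** U ** b = e).
  { apply (proj2 He); [norm; arw UbV; arw Ve | norm; arw eV | arw be]; reflexivity. }
  assert (bVU : b ** V ** U = e).
  { apply (proj2 He); [norm; arw UbV; arw Ve | norm; arw eb | arw Ue]; reflexivity. }
  exists (V ** U); repeat split; norm; [arw eV | arw Ue | |]; easy.
Qed.

Lemma local_group_inverse_comm a b : e ** a = a -> a ** e = a -> e ** b = b ->
  a ** b = e -> b ** a = e.
Proof.
  intros ea ae eb ab; destruct (local_group_inverse ea ae) as (u & _ & ue & ua & _).
  replace b with u; [exact ua|].
  rewrite <- eb, <- ua, <- Hassoc, ab, ue; reflexivity.
Qed.

Lemma factor_through_idem c : exists s t, c = s ** t /\ s ** e = s /\ e ** t = t.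
Proof.
  destruct (simple_divides e c) as (s & t & ->).
  exists (s ** e), (e ** t); repeat split; norm; arw ee; reflexivity.
Qed.

Lemma completely_regular c : exists c', c ** c' ** c = c /\ c' ** c ** c' = c' /\ c ** c' = c' ** c.
Proof.
  destruct (factor_through_idem c) as (s & t & -> & se & et).
  assert (ets : e ** (t ** s) = t ** s) by (norm; arw et; reflexivity).
  assert (tse : t ** s ** e = t ** s) by (rewrite <- Hassoc, se; reflexivity).
  destruct (local_group_inverse ets tse) as (g & _ & ge & gts & tsg).
  rewrite Hassoc in gts.
  exists (s ** g ** g ** t); repeat split; norm;
    arw tsg; arw gts; arw se; arw ge; reflexivity.
Qed.

Lemma right_stable a s : exists t, a ** s ** t = a.
Proof.
  destruct (factor_through_idem a) as (s1 & t1 & -> & se & et).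
  destruct (simple_divides (t1 ** s) e) as (x & y & xtsy); symmetry in xtsy.
  rewrite Hassoc in xtsy.
  set (A := e ** x ** e); set (B := t1 ** s ** y ** e).
  assert (eA : e ** A = A) by (unfold A; norm; arw ee; reflexivity).
  assert (Ae : A ** e = A) by (unfold A; arw ee; reflexivity).
  assert (eB : e ** B = B) by (unfold B; norm; arw et; reflexivity).
  assert (AB : A ** B = e) by (unfold A, B; norm; arw et; arw xtsy; arw ee; reflexivity).
  pose proof (local_group_inverse_comm eA Ae eB AB) as BA; unfold B in BA.
  exists (y ** e ** A ** t1); norm; arw BA; arw se; reflexivity.
Qed.

End CompletelySimple.

Lemma completely_simple_opp {S : Type} (m : S -> S -> S) :
  completely_simple m -> completely_simple (fun a b => m b a).
Proof.
  intros (Hassoc & Hsimple & e & ee & He); repeat split.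
  - intros a b c; symmetry; apply Hassoc.
  - intros I [HI Hcl]; apply Hsimple; split; [exact HI|].
    intros a s Ha; split; apply (Hcl a s Ha).
  - exists e; split; [exact ee|]; intros f ff ef fe; apply He; assumption.
Qed.

Lemma completely_simple_RL_idempotent {S : Type} (m : S -> S -> S) :
  completely_simple m -> forall p q, exists F, RL_idempotent m p q F.
Proof.
  intros HS p q; pose proof HS as (Hassoc & Hsimple & e & He).
  destruct (completely_regular Hassoc Hsimple He (m p q)) as (c & pqc & _ & comm).
  destruct (right_stable Hassoc Hsimple He p q) as [t pqt].
  (* left stability is right stability in the opposite semigroup *)
  destruct (completely_simple_opp HS) as (Hassoc' & Hsimple' & e' & He').
  destruct (right_stable Hassoc' Hsimple' He' q p) as [t' tpq]; simpl in tpq.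
  repeat rewrite Hassoc in pqc, comm, tpq.
  (* pq c is the identity of the group H-class of pq. *)
  exists (m (m p q) c); repeat split.
  - repeat rewrite Hassoc; assoc_rewrite Hassoc pqc; reflexivity.
  - rewrite <- pqt at 2; repeat rewrite Hassoc; assoc_rewrite Hassoc pqc; exact pqt.
  - repeat rewrite Hassoc; assoc_rewrite Hassoc comm.
    rewrite <- tpq at 1; repeat rewrite Hassoc.
    assoc_rewrite Hassoc pqc; exact tpq.
  - exists (m q c); symmetry; apply Hassoc.
  - exists (m c p); exact comm.
Qed.

Lemma RL_idempotent_choice {S : Type} (m : S -> S -> S) : completely_simple m ->
  exists E : S -> S -> S, forall p q, RL_idempotent m p q (E p q).
Proof.
  intros HS.
  exists (fun p q => proj1_sig (constructive_indefinite_description _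
                                   (completely_simple_RL_idempotent HS p q))).
  intros p q; apply proj2_sig.
Qed.

Section Factor.
Variable X : Type.

Lemma cls_eq_iff (u v : neword X) : cls u = cls v <-> nf_equiv (to_list u) (to_list v).
Proof.
  split.
  - intros H; apply (f_equal (@proj1_sig _ _)) in H; simpl in H.
    change (ThetaCS u v); rewrite H; change (nf_equiv (to_list v) (to_list v)); reflexivity.
  - intros H; apply subset_eq_compat; extensionality w; apply propositional_extensionality.
    change (nf_equiv (to_list u) (to_list w) <-> nf_equiv (to_list v) (to_list w)).
    rewrite H; reflexivity.
Qed.

Lemma cls_rep (P : FactorCS X) : cls (rep P) = P.
Proof.
  apply eq_sig_hprop; [intros; apply proof_irrelevance|]; unfold rep.
  destruct (constructive_indefinite_description _ _) as [u Hu]; simpl; symmetry; exact Hu.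
Qed.

Lemma factor_mul_cls (u v : neword X) : factor_mul (cls u) (cls v) = cls (nw_cat u v).
Proof.
  apply cls_eq_iff; change (nf_equiv (to_list (rep (cls u)) ++ to_list (rep (cls v)))
                                     (to_list u ++ to_list v)).
  rewrite !(proj1 (cls_eq_iff _ _) (cls_rep _)); reflexivity.
Qed.

Lemma factor_cls_cons (c d : tletter X) l :
  cls (NeWord c (d :: l)) = factor_mul (cls (NeWord c [])) (cls (NeWord d l)).
Proof. rewrite factor_mul_cls; reflexivity. Qed.

Lemma factor_mul_assoc : sg_assoc (@factor_mul X).
Proof.
  intros a b c; rewrite <- (cls_rep a), <- (cls_rep b), <- (cls_rep c), !factor_mul_cls.
  apply cls_eq_iff; unfold nw_cat, to_list; simpl; rewrite <- app_assoc; reflexivity.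
Qed.

Lemma factor_simple : simple_sg (@factor_mul X).
Proof.
  intros I [[a Ia] Hcl] b.
  rewrite <- (cls_rep a) in Ia; rewrite <- (cls_rep b).
  destruct (rep a) as [ca la], (rep b) as [cb lb].
  set (s := cls (NeWord (TW (iota_l cb) (tau_l (last la ca))) (word_inv ca la))).
  replace (cls (NeWord cb lb)) with
    (factor_mul (factor_mul s (cls (NeWord ca la))) (cls (NeWord cb lb))).
  - apply Hcl, (Hcl _ s Ia).
  - unfold s; rewrite !factor_mul_cls; apply cls_eq_iff.
    change (nf_equiv ((TW (iota_l cb) (tau_l (last la ca)) :: word_inv ca la ++ ca :: la)
                        ++ cb :: lb) (cb :: lb)).
    rewrite word_inv_l; apply red_rule_nf_equiv, red_rule_wedge_letter.
Qed.

Lemma factor_wedge_primitive (x : Xbar X) :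
  primitive_idem (@factor_mul X) (cls (NeWord (TW x x) [])).
Proof.
  split; [rewrite factor_mul_cls; apply cls_eq_iff, red_rule_nf_equiv; constructor|].
  intros f ff ef fe; rewrite <- (cls_rep f) in *; destruct (rep f) as [c l].
  rewrite factor_mul_cls in ff, ef, fe; apply cls_eq_iff in ff, ef, fe; apply cls_eq_iff.
  change (nf_equiv ((c :: l) ++ c :: l) (c :: l)) in ff.
  change (nf_equiv (TW x x :: c :: l) (c :: l)) in ef.
  change (nf_equiv ((c :: l) ++ [TW x x]) (c :: l)) in fe.
  assert (xc : x = iota_l c) by (apply nf_equiv_same_ends in ef as [H _]; injection H; easy).
  subst x; symmetry.
  (* (x ^ x) = f f* (x ^ x) = f f f* (x ^ x) = f (x ^ x) = f *)
  rewrite <- (word_inv_r c l (iota_l c)), <- ff at 1.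
  rewrite <- app_assoc, word_inv_r; exact fe.
Qed.

Lemma factor_completely_simple : inhabited X -> completely_simple (@factor_mul X).
Proof.
  intros [x]; split; [exact factor_mul_assoc | split; [exact factor_simple|]].
  eexists; apply (factor_wedge_primitive (inl x)).
Qed.

Lemma factor_xi_inverse (a : Xbar X) :
  is_inverse (@factor_mul X) (factor_xi a) (factor_xi (primeX a)).
Proof.
  unfold factor_xi; split; rewrite !factor_mul_cls; apply cls_eq_iff;
    unfold nw_cat, to_list; simpl.
  - rewrite (red_rule_nf_equiv _ (R5_primed a)); apply red_rule_nf_equiv; constructor.
  - rewrite (red_rule_nf_equiv _ (R5 a)); apply red_rule_nf_equiv; constructor.
Qed.

Lemma factor_xi_matched : matched (@factor_mul X) (@factor_xi X).
Proof. intros x; exact (factor_xi_inverse (inl x)). Qed.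

Lemma factor_wedge_RL_idempotent (x y : Xbar X) :
  RL_idempotent (@factor_mul X) (factor_xi x) (factor_xi y) (cls (NeWord (TW x y) [])).
Proof.
  unfold factor_xi; repeat split.
  - rewrite factor_mul_cls; apply cls_eq_iff, red_rule_nf_equiv; constructor.
  - rewrite factor_mul_cls; apply cls_eq_iff, red_rule_nf_equiv; constructor.
  - rewrite factor_mul_cls; apply cls_eq_iff, red_rule_nf_equiv; constructor.
  - exists (cls (NeWord (TL (primeX x)) [TW x y])); rewrite factor_mul_cls; apply cls_eq_iff.
    unfold nw_cat, to_list; simpl.
    rewrite (red_rule_nf_equiv _ (R5_primed x)), (red_rule_nf_equiv _ (R3 x (primeX x) y)).
    reflexivity.
  - exists (cls (NeWord (TW x y) [TL (primeX y)])); rewrite factor_mul_cls; apply cls_eq_iff.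
    unfold nw_cat, to_list; simpl.
    rewrite (red_rule_nf_equiv _ (R5 y)), (red_rule_nf_equiv _ (R4 y (primeX y) x)).
    reflexivity.
Qed.

Lemma factor_hom_unique {S : Type} (mS : S -> S -> S) (psi1 psi2 : FactorCS X -> S) :
  sg_assoc mS -> sg_hom (@factor_mul X) mS psi1 -> sg_hom (@factor_mul X) mS psi2 ->
  (forall y, psi1 (factor_xi y) = psi2 (factor_xi y)) -> forall P, psi1 P = psi2 P.
Proof.
  intros Hassoc H1 H2 Hxi.
  assert (Hletter : forall c, psi1 (cls (NeWord c [])) = psi2 (cls (NeWord c []))).
  { intros [a | a b]; [apply Hxi|].
    apply (RL_idempotent_unique (p := psi1 (factor_xi a)) (q := psi1 (factor_xi b)) Hassoc).
    - exact (hom_RL_idempotent H1 (factor_wedge_RL_idempotent a b)).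
    - rewrite !Hxi; exact (hom_RL_idempotent H2 (factor_wedge_RL_idempotent a b)). }
  intros P; rewrite <- (cls_rep P); destruct (rep P) as [c l].
  revert c; induction l as [|d l IH]; intros c; [apply Hletter|].
  rewrite factor_cls_cons, H1, H2, Hletter, IH; reflexivity.
Qed.

Lemma ThetaCS_ends (u v : neword X) :
  ThetaCS u v -> nw_iota u = nw_iota v /\ nw_tau u = nw_tau v.
Proof.
  intros H; destruct (nf_equiv_same_ends H) as [Hiota Htau]; split.
  - injection Hiota; easy.
  - specialize (Htau (nw_hd u)); unfold to_list in Htau; rewrite !last_cons_default in Htau.
    exact Htau.
Qed.

Lemma ThetaCS_bin_congruence : bin_congruence (@ThetaCS X).
Proof.
  change (bin_congruence (fun u v : neword X => nf_equiv (to_list u) (to_list v))).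
  split; [|split; [|split]].
  - intros u; reflexivity.
  - intros u v H; symmetry; exact H.
  - intros u v w H1 H2; transitivity (to_list v); assumption.
  - intros u v u' v' Hu Hv; split.
    + change (nf_equiv (to_list u ++ to_list v) (to_list u' ++ to_list v')).
      rewrite Hu, Hv; reflexivity.
    + unfold nw_wedge; rewrite (proj1 (ThetaCS_ends Hu)), (proj2 (ThetaCS_ends Hv)).
      reflexivity.
Qed.

End Factor.

Section Evaluation.
Variables (X S : Type) (m : S -> S -> S) (E : S -> S -> S) (nu : Xbar X -> S).
Hypotheses (Hassoc : sg_assoc m) (HE : forall p q, RL_idempotent m p q (E p q))
  (Hnu : matched m nu).

Definition eval_letter (c : tletter X) : S :=
  match c with TL a => nu a | TW a b => E (nu a) (nu b) end.

(* Lists are evaluated in the monoid S^1, with [None] as the adjoined identity. *)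
Definition mul_opt (a b : option S) : option S :=
  match a, b with
  | Some x, Some y => Some (m x y)
  | Some x, None => Some x
  | None, y => y
  end.

Definition eval_list (l : list (tletter X)) : option S :=
  fold_right (fun c acc => mul_opt (Some (eval_letter c)) acc) None l.

Definition eval_word (u : neword X) : S :=
  match eval_list (nw_tl u) with
  | None => eval_letter (nw_hd u)
  | Some t => m (eval_letter (nw_hd u)) t
  end.

Definition eval_factor (P : FactorCS X) : S := eval_word (rep P).

Lemma eval_list_to_list (u : neword X) : eval_list (to_list u) = Some (eval_word u).
Proof. unfold eval_word, to_list; simpl; destruct (eval_list (nw_tl u)); reflexivity. Qed.

Lemma eval_list_app (u v : list (tletter X)) :
  eval_list (u ++ v) = mul_opt (eval_list u) (eval_list v).
Proof.
  induction u as [|c u IH]; simpl; [destruct (eval_list v); reflexivity|].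
  rewrite IH; destruct (eval_list u), (eval_list v); simpl; rewrite ?Hassoc; reflexivity.
Qed.

Lemma matched_prime (a : Xbar X) : is_inverse m (nu (primeX a)) (nu a).
Proof. destruct a as [x | x]; simpl; destruct (Hnu x); split; assumption. Qed.

Lemma red_rule_eval (l r : list (tletter X)) : red_rule l r -> eval_list l = eval_list r.
Proof.
  destruct 1 as [x y | x y | x y z | x y z | x]; simpl; f_equal.
  - apply (HE (nu y) (nu x)).
  - apply (HE (nu x) (nu y)).
  - destruct (HE (nu x) (nu z)) as (_ & _ & _ & [s ->] & _).
    rewrite Hassoc; f_equal; apply (HE (nu x) (nu y)).
  - destruct (HE (nu z) (nu x)) as (_ & _ & _ & _ & [t ->]).
    rewrite <- Hassoc; f_equal; apply (HE (nu y) (nu x)).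
  - exact (RL_idempotent_unique Hassoc
             (inverse_RL_idempotent Hassoc (matched_prime x)) (HE _ _)).
Qed.

Lemma nf_equiv_eval (u v : list (tletter X)) : nf_equiv u v -> eval_list u = eval_list v.
Proof.
  assert (Hreds : forall x y, reds x y -> eval_list x = eval_list y).
  { induction 1 as [x y (p & s & l & r & R & -> & ->)| |]; [|reflexivity|congruence].
    rewrite !eval_list_app, (red_rule_eval R); reflexivity. }
  intros (w & [Hu _] & [Hv _]); rewrite (Hreds _ _ Hu), (Hreds _ _ Hv); reflexivity.
Qed.

Lemma eval_factor_cls (u : neword X) : eval_factor (cls u) = eval_word u.
Proof.
  assert (H : Some (eval_factor (cls u)) = Some (eval_word u)).
  { unfold eval_factor; rewrite <- !eval_list_to_list.
    apply nf_equiv_eval, cls_eq_iff, cls_rep. }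
  injection H; easy.
Qed.

Lemma eval_word_cat (u v : neword X) : eval_word (nw_cat u v) = m (eval_word u) (eval_word v).
Proof.
  assert (H : Some (eval_word (nw_cat u v)) = Some (m (eval_word u) (eval_word v))).
  { rewrite <- eval_list_to_list.
    change (eval_list (to_list u ++ to_list v) = Some (m (eval_word u) (eval_word v))).
    rewrite eval_list_app, !eval_list_to_list; reflexivity. }
  injection H; easy.
Qed.

Lemma eval_factor_hom : sg_hom (@factor_mul X) m eval_factor.
Proof.
  intros a b; rewrite <- (cls_rep a), <- (cls_rep b), factor_mul_cls, !eval_factor_cls.
  apply eval_word_cat.
Qed.

Lemma eval_factor_xi (y : Xbar X) : eval_factor (factor_xi y) = nu y.
Proof. apply eval_factor_cls. Qed.

End Evaluation.

Theorem proposition2p6 (X : Type) (HX : inhabited X) :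
  bin_congruence (@ThetaCS X) /\
  @bifree_CS X (FactorCS X) (@factor_mul X) (@factor_xi X).
Proof.
  split; [apply ThetaCS_bin_congruence|].
  split; [exact (factor_completely_simple HX)|].
  split; [apply factor_xi_matched|].
  intros S mS HS nu Hnu.
  destruct (RL_idempotent_choice HS) as [E HE].
  pose proof (proj1 HS) as Hassoc.
  pose proof (eval_factor_hom E Hassoc HE Hnu) as Hhom.
  pose proof (eval_factor_xi E Hassoc HE Hnu) as Hxi.
  exists (eval_factor mS E nu); split; [exact Hhom | split; [exact Hxi|]].
  intros psi Hpsi Hpsi_xi; apply (factor_hom_unique Hassoc Hpsi Hhom).
  intros y; rewrite Hpsi_xi, Hxi; reflexivity.
Qed.
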